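(* Let $\mu\in\mathcal P_c^*(\mathbb R^2)$, $\mathbf A\in\mathrm{GL}(2)$, $\mathbf y\in\mathbb R^2$ and $\mu_{\mathbf A,\mathbf y}=(\mathbf A\cdot+\mathbf y)_\#\mu$. Then $\mathcal N_{\mathrm m}[\mu_{\mathbf A,\mathbf y}]=\mathcal N_{\mathrm m}[\mu]$.
   Context: $\mathbb S_1=\{x\in\mathbb R^2:\|x\|=1\}$; $\mathcal R_\theta[\mu]=(\langle\cdot,\theta\rangle)_\#\mu$. Fix a reference Borel probability measure $\rho$ on $\mathbb R$ without atoms. For a probability measure $\nu$ on $\mathbb R$ with $F_\nu(t)=\nu((-\infty,t])$, $F_\nu^{[-1]}(t)=\inf\{s:F_\nu(s)>t\}$ and the CDT is $\hat\nu=F_\nu^{[-1]}\circ F_\rho$; $\widehat{\mathcal R}_\theta[\mu]$ is the CDT of $\mathcal R_\theta[\mu]$. For $g\in L^2_\rho(\mathbb R)$, $\operatorname{mean}(g)=\int g\,\mathrm d\rho$, $\operatorname{std}(g)=(\int|g-\operatorname{mean}(g)|^2\mathrm d\rho)^{1/2}$. $\mathcal P_c^*(\mathbb R^2)$ is the set of compactly supported Borel probability measures on $\mathbb R^2$ whose support has affine hull of dimension $>1$. For such $\mu$: $\mathcal N_\theta[\mu](t)=\big(\widehat{\mathcal R}_\theta[\mu](t)-\operatorname{mean}(\widehat{\mathcal R}_\theta[\mu])\big)/\operatorname{std}(\widehat{\mathcal R}_\theta[\mu])$ and $\mathcal N_{\mathrm m}[\mu](t)=\sup_{\theta\in\mathbb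 S_1}\mathcal N_\theta[\mu](t)$, $t\in\mathbb R$. *)

From HB Require Import structures.
From mathcomp Require Import all_boot all_order all_algebra.
From mathcomp Require Import all_classical all_reals all_analysis.
Set Implicit Arguments. Unset Strict Implicit. Unset Printing Implicit Defensive.
Import Order.TTheory GRing.Theory Num.Theory.
Import numFieldNormedType.Exports.
Local Open Scope classical_set_scope.
Local Open Scope ring_scope.

Section Defs.
Variable R : realType.

Definition dot2 (x th : R * R) : R := x.1 * th.1 + x.2 * th.2.
Definition circle1 : set (R * R) := [set th | th.1 ^+ 2 + th.2 ^+ 2 = 1].

Definition pushf (T U : Type) (f : T -> U) (nu : set T -> \bar R) : set U -> \bar R :=
  fun B => nu (f @^-1` B).

Definition radon (th : R * R) (mu : set (R * R) -> \bar R) : set R -> \bar R :=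
  pushf (fun x => dot2 x th) mu.

Definition cdf (nu : set R -> \bar R) (t : R) : R := fine (nu [set s | s <= t]).

(* generalized inverse F^[-1](t) = inf {s | F(s) > t}, with inf of the empty set = +oo *)
Definition gen_inv (F : R -> R) (t : R) : \bar R :=
  ereal_inf [set s%:E | s in [set s : R | t < F s]].

Definition cdt (rho : set R -> \bar R) (nu : set R -> \bar R) (t : R) : \bar R :=
  gen_inv (cdf nu) (cdf rho t).

Definition meanL (rho : {measure set R -> \bar R}) (g : R -> \bar R) : R :=
  fine (\int[rho]_x g x)%E.

Definition stdL (rho : {measure set R -> \bar R}) (g : R -> \bar R) : R :=
  Num.sqrt (fine (\int[rho]_x ((g x - (meanL rho g)%:E) * (g x - (meanL rho g)%:E)))%E).

Definition Ntheta (rho : {measure set R -> \bar R}) (th : R * R)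
  (mu : set (R * R) -> \bar R) (t : R) : \bar R :=
  let g := cdt rho (radon th mu) in
  ((g t - (meanL rho g)%:E) * ((stdL rho g)^-1)%:E)%E.

Definition Nmax (rho : {measure set R -> \bar R}) (mu : set (R * R) -> \bar R) (t : R)
  : \bar R :=
  ereal_sup [set Ntheta rho th mu t | th in circle1].

Definition msupport (mu : set (R * R) -> \bar R) : set (R * R) :=
  [set x | forall U : set (R * R), open U -> U x -> (0 < mu U)%E].

(* P_c^*(R^2): compact support whose affine hull has dimension > 1,
   i.e. the support is not contained in any affine line *)
Definition in_Pcstar (mu : set (R * R) -> \bar R) : Prop :=
  compact (msupport mu) /\
  ~ (exists th c, circle1 th /\ msupport mu `<=` [set x | dot2 x th = c]).

Definition affmap (A : 'M[R]_2) (y : R * R) (x : R * R) : R * R :=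
  (A 0 0 * x.1 + A 0 1 * x.2 + y.1, A 1 0 * x.1 + A 1 1 * x.2 + y.2).

End Defs.

From Pilot Require Import Defs.
From HB Require Import structures.
From mathcomp Require Import all_boot all_order all_algebra.
From mathcomp Require Import all_classical all_reals all_analysis.
From mathcomp Require Import measurable_realfun lebesgue_integral.
From mathcomp Require Import ring lra.
Import Order.TTheory GRing.Theory Num.Theory.
Local Open Scope classical_set_scope.
Local Open Scope ring_scope.

(* For th on the unit circle, <A x + y, th> = |A^T th| <x, ph> + <y, th> with
   ph = A^T th / |A^T th|.  Hence the Radon projection of the pushed measure in
   direction th is the Radon projection of mu in direction ph, pushed forward by
   the increasing affine map s |-> |A^T th| s + <y, th>.  The cumulative
   distribution transform commutes with increasing affine maps and
   standardisation cancels them, so N_th[mu_{A,y}] = N_ph[mu]; as A is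
   invertible, th |-> ph is a bijection of the circle and the two suprema agree.
   The identity holds direction by direction. *)

Section ereal_inf_affine.
Context {R : realType}.
Local Open Scope ereal_scope.

Lemma ereal_inf_addr (X : set (\bar R)) (c : R) :
  ereal_inf [set x + c%:E | x in X] = ereal_inf X + c%:E.
Proof.
gen have le_inf : c X / ereal_inf X + c%:E <= ereal_inf [set x + c%:E | x in X].
  apply: le_ereal_inf_tmp => _ [x Xx <-]; apply: leeD2r; exact: ereal_inf_lbound.
apply/eqP; rewrite eq_le le_inf andbT -leeBlDr//.
apply: le_trans (le_inf (- c)%R _) _.
have -> // : [set x - c%:E | x in [set x + c%:E | x in X]] = X.
rewrite image_comp -[RHS]image_id; apply: eq_imagel => x _ /=.
by rewrite -addeA -EFinD subrr adde0.
Qed.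

Lemma ereal_inf_affine (S : set R) (r c : R) : (0 < r)%R ->
  ereal_inf [set (r * u + c)%:E | u in S] = r%:E * ereal_inf [set u%:E | u in S] + c%:E.
Proof.
move=> r_gt0; rewrite -ereal_inf_pZl// -ereal_inf_addr !image_comp.
by congr ereal_inf; apply: eq_imagel.
Qed.

End ereal_inf_affine.

Section cdt_affine.
Context {R : realType}.
Implicit Types (nu : set R -> \bar R) (r c : R).

Lemma cdf_pushf_affine nu r c s : 0 < r ->
  Defs.cdf (pushf (fun u => r * u + c) nu) s = Defs.cdf nu ((s - c) / r).
Proof.
move=> r_gt0; rewrite /Defs.cdf /pushf; congr (fine (nu _)).
by apply/seteqP; split => u /=; rewrite ler_pdivlMr// lerBrDr mulrC.
Qed.

Lemma cdt_pushf_affine (rho : set R -> \bar R) nu r c : 0 < r ->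
  cdt rho (pushf (fun u => r * u + c) nu) = (fun t => r%:E * cdt rho nu t + c%:E)%E.
Proof.
move=> r_gt0; apply/funext => t; rewrite /cdt /gen_inv -ereal_inf_affine//; congr ereal_inf.
have r_neq0 : r != 0 by rewrite gt_eqF.
apply/seteqP; split => _ [s /= Fs <-].
- exists ((s - c) / r); first by rewrite /= -cdf_pushf_affine.
  by congr EFin; field.
- exists (r * s + c) => //=.
  by rewrite cdf_pushf_affine// addrK mulrC mulKf.
Qed.

End cdt_affine.

Lemma nondecreasing_emeasurable {R : realType} (f : R -> \bar R) :
  {homo f : x y / x <= y >-> (x <= y)%E} -> measurable_fun [set: R] f.
Proof.
move=> f_nd.
apply: (measurability _ (ErealGenCInfty.measurableE R)) => /= _ [_] [r] -> <-.
apply: measurableI => //; apply: is_interval_measurable => s t/=.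
rewrite !in_itv/= !andbT => fs ft u /andP[su ut].
by rewrite in_itv/= andbT (le_trans fs)// f_nd.
Qed.

Section cdt_measurable.
Context {R : realType} (rho : {finite_measure set R -> \bar R}).

Lemma le_cdf : {homo Defs.cdf rho : a b / a <= b}.
Proof.
have mray x : measurable [set s : R | s <= x].
  by rewrite -[X in measurable X]set_itvNyc; exact: measurable_itv.
move=> a b ab; rewrite /Defs.cdf fine_le ?fin_num_measure// le_measure ?inE//.
by move=> x /= /le_trans->.
Qed.

Lemma measurable_cdt nu : measurable_fun [set: R] (cdt rho nu).
Proof.
apply: nondecreasing_emeasurable => a b ab; rewrite /cdt /gen_inv.
apply: ereal_inf_le_tmp => _ [s Fs <-]; exists s => //=.
exact: le_lt_trans (le_cdf _ _ ab) Fs.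
Qed.

End cdt_measurable.

Section integrable_criteria.
Context d (T : measurableType d) (R : realType).
Local Open Scope ereal_scope.

Lemma integrable_of_fin_num_integral (mu : {measure set T -> \bar R}) (g : T -> \bar R) :
  measurable_fun [set: T] g -> \int[mu]_x g x \is a fin_num -> mu.-integrable [set: T] g.
Proof.
move=> mg; rewrite integralE fin_numB => /andP[gp_fin gn_fin].
apply/integrableP; split => //.
rewrite (_ : (fun x => `|g x|) = (fun x => g^\+ x + g^\- x)); last first.
  by apply/funext => x; rewrite -[LHS]/((abse \o g) x) fune_abse.
rewrite ge0_integralD//; [|exact: measurable_funepos|exact: measurable_funeneg].
by apply: lte_add_pinfty; rewrite -ge0_fin_numE// integral_ge0.
Qed.

Lemma integrable_of_fin_num_sqr (mu : {finite_measure set T -> \bar R}) (g : T -> \bar R) :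
  measurable_fun [set: T] g -> \int[mu]_x (g x * g x) \is a fin_num ->
  mu.-integrable [set: T] g.
Proof.
move=> mg gg_fin.
have gg_ge0 x : 0 <= g x * g x by rewrite -expe2 sqre_ge0.
have gg_int : mu.-integrable [set: T] (fun x => g x * g x).
  apply/integrableP; split; first exact: emeasurable_funM.
  by under eq_integral do rewrite gee0_abs//; rewrite -ge0_fin_numE// integral_ge0.
have gg1_int : mu.-integrable [set: T] (fun x => g x * g x + 1%:E).
  exact: integrableD gg_int (finite_measure_integrable_cst mu 1 _).
apply: (le_integrable measurableT mg _ gg1_int) => x _.
case: (g x) => [v| |] //=.
rewrite lee_fin [`|v * v + 1|%R]ger0_norm; last by nra.
by rewrite ler_norml; apply/andP; split; nra.
Qed.

End integrable_criteria.

Section standardize.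
Context {R : realType} (rho : probability R R).
Local Open Scope ereal_scope.
Implicit Types (g : R -> \bar R) (r c : R).

Definition standardize g (t : R) : \bar R :=
  (g t - (meanL rho g)%:E) * ((stdL rho g)^-1)%:E.

Lemma Ntheta_standardize th (mu : set (R * R) -> \bar R) t :
  Ntheta rho th mu t = standardize (cdt rho (radon th mu)) t.
Proof. by []. Qed.

(* Junk values: a non-integrable g has [meanL rho g = 0] and [stdL rho g = 0],
   and [0^-1 = 0]. *)
Lemma standardize_nonintegrable g t : measurable_fun [set: R] g ->
  ~ rho.-integrable [set: R] g -> standardize g t = 0.
Proof.
move=> mg g_nint.
have mean0 : meanL rho g = 0%R.
  rewrite /meanL; have [g_fin|] := boolP (\int[rho]_x g x \is a fin_num).
    by case: g_nint; exact: integrable_of_fin_num_integral.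
  by case: (\int[rho]_x g x).
have std0 : stdL rho g = 0%R.
  rewrite /stdL mean0; under eq_integral do rewrite sube0.
  have [gg_fin|] := boolP (\int[rho]_x (g x * g x) \is a fin_num).
    by case: g_nint; exact: integrable_of_fin_num_sqr.
  by case: (\int[rho]_x _) => //= *; rewrite sqrtr0.
by rewrite /standardize std0 invr0 mule0.
Qed.

Lemma EFin_affineK r c (x : \bar R) : (0 < r)%R ->
  (r^-1)%:E * (r%:E * x + c%:E) + (- (c / r))%:E = x.
Proof.
move=> r_gt0; have r_neq0 : r != 0%R by rewrite gt_eqF.
case: x => [v| |] /=; first by congr EFin; field.
- by rewrite !gt0_muley ?lte_fin ?invr_gt0.
- by rewrite !gt0_muleNy ?lte_fin ?invr_gt0.
Qed.

Lemma EFin_affineB r c m (x : \bar R) : (0 < r)%R ->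
  r%:E * x + c%:E - (r * m + c)%:E = r%:E * (x - m%:E).
Proof.
move=> r_gt0; case: x => [v| |] /=; first by congr EFin; ring.
- by rewrite gt0_muley ?lte_fin.
- by rewrite gt0_muleNy ?lte_fin.
Qed.

Lemma integrable_affine g r c : rho.-integrable [set: R] g ->
  rho.-integrable [set: R] (fun x => r%:E * g x + c%:E).
Proof.
move=> g_int; apply: integrableD => //; first exact: integrableZl.
exact: finite_measure_integrable_cst.
Qed.

Lemma integrable_affine_inv g r c : (0 < r)%R ->
  rho.-integrable [set: R] (fun x => r%:E * g x + c%:E) -> rho.-integrable [set: R] g.
Proof.
move=> r_gt0 /(integrable_affine _ r^-1 (- (c / r))).
by apply: eq_integrable => // x _; rewrite EFin_affineK.
Qed.

Lemma meanL_affine g r c : rho.-integrable [set: R] g ->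
  meanL rho (fun x => r%:E * g x + c%:E) = (r * meanL rho g + c)%R.
Proof.
move=> g_int; rewrite /meanL integralD//; last 2 first.
- exact: integrableZl.
- exact: finite_measure_integrable_cst.
rewrite integralZl// integral_cst// [X in c%:E * X](_ : _ = 1) ?mule1//; last first.
  exact: probability_setT.
by case: (\int[rho]_x g x) (integrable_fin_num measurableT g_int).
Qed.

Lemma stdL_affine g r c : (0 < r)%R -> rho.-integrable [set: R] g ->
  stdL rho (fun x => r%:E * g x + c%:E) = (r * stdL rho g)%R.
Proof.
move=> r_gt0 g_int; rewrite /stdL meanL_affine//; set m := meanL rho g.
have mg := measurable_int _ g_int.
under eq_integral do rewrite EFin_affineB// muleACA -EFinM -expr2.
rewrite ge0_integralZl_EFin ?sqr_ge0//; last 2 first.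
- by move=> x _; rewrite -expe2 sqre_ge0.
- by apply: emeasurable_funM; apply: emeasurable_funB.
case: (\int[rho]_x _) => [v| |] /=.
- by rewrite sqrtrM ?sqr_ge0// sqrtr_sqr gtr0_norm.
- by rewrite gt0_muley ?lte_fin ?exprn_gt0//= sqrtr0 mulr0.
- by rewrite gt0_muleNy ?lte_fin ?exprn_gt0//= sqrtr0 mulr0.
Qed.

Lemma standardize_affine g r c t : (0 < r)%R -> measurable_fun [set: R] g ->
  standardize (fun x => r%:E * g x + c%:E) t = standardize g t.
Proof.
move=> r_gt0 mg.
have [g_int|g_nint] := pselect (rho.-integrable [set: R] g); last first.
  rewrite !standardize_nonintegrable//.
  - by apply: emeasurable_funD => //; exact: measurable_funeM.
  - by move=> /(integrable_affine_inv g r c r_gt0)/g_nint.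
rewrite /standardize (meanL_affine g r c g_int) (stdL_affine g r c r_gt0 g_int).
by rewrite EFin_affineB// invfM muleC muleA -EFinM mulrAC mulVf ?gt_eqF// mul1r muleC.
Qed.

End standardize.

Section plane.
Context {R : realType}.
Implicit Types (A : 'M[R]_2) (x y w th : R * R) (k : R).

Lemma det_mx2 A : \det A = A 0 0 * A 1 1 - A 0 1 * A 1 0.
Proof.
rewrite (expand_det_row _ 0) !big_ord_recl big_ord0 /cofactor !det_mx11 !mxE /=.
have -> : lift 0 (0 : 'I_1) = 1 :> 'I_2 by apply/val_inj.
have -> : lift 1 (0 : 'I_1) = 0 :> 'I_2 by apply/val_inj.
rewrite expr0 expr1; ring.
Qed.

Definition trmul A th : R * R :=
  (A 0 0 * th.1 + A 1 0 * th.2, A 0 1 * th.1 + A 1 1 * th.2).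

Definition scale2 k w : R * R := (k * w.1, k * w.2).

Definition norm2 w : R := Num.sqrt (w.1 ^+ 2 + w.2 ^+ 2).

Definition normalize2 w : R * R := scale2 (norm2 w)^-1 w.

Lemma dot2_affmap A y x th : dot2 (affmap A y x) th = dot2 x (trmul A th) + dot2 y th.
Proof. by rewrite /dot2 /=; ring. Qed.

Lemma dot2_scale2 x k w : dot2 x (scale2 k w) = k * dot2 x w.
Proof. by rewrite /dot2 /=; ring. Qed.

Lemma trmul_scale2 A k w : trmul A (scale2 k w) = scale2 k (trmul A w).
Proof. by rewrite /trmul /scale2 /=; congr pair; ring. Qed.

Lemma norm2_sqr w : norm2 w ^+ 2 = w.1 ^+ 2 + w.2 ^+ 2.
Proof. by rewrite sqr_sqrtr// addr_ge0 ?sqr_ge0. Qed.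

Lemma norm2_gt0 w : w != (0, 0) -> 0 < norm2 w.
Proof.
case: w => w1 w2; rewrite xpair_eqE /norm2 sqrtr_gt0 lt_def.
by rewrite addr_ge0 ?sqr_ge0// andbT paddr_eq0 ?sqr_ge0// !sqrf_eq0.
Qed.

Lemma normalize2_scale2 k w : 0 < k -> normalize2 (scale2 k w) = normalize2 w.
Proof.
move=> k_gt0; rewrite /normalize2 /norm2 /scale2 /= !exprMn -mulrDr.
rewrite sqrtrM ?sqr_ge0// sqrtr_sqr gtr0_norm// invfM.
by congr pair; rewrite mulrACA mulVf ?gt_eqF// mul1r.
Qed.

Lemma circle1_neq0 w : circle1 w -> w != (0, 0).
Proof.
rewrite /circle1; apply: contraPneq => ->.
by rewrite /= expr0n addr0 => /eqP; rewrite eq_sym oner_eq0.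
Qed.

Lemma normalize2_circle1 w : circle1 w -> normalize2 w = w.
Proof.
rewrite /normalize2 /norm2 /circle1 => ->.
by rewrite sqrtr1 invr1 /scale2 !mul1r; case: w.
Qed.

Lemma circle1_normalize2 w : w != (0, 0) -> circle1 (normalize2 w).
Proof.
move=> /norm2_gt0 w_gt0; rewrite /circle1 /normalize2 /scale2 /= !exprMn -mulrDr.
by rewrite -norm2_sqr -exprMn mulVf ?gt_eqF// expr1n.
Qed.

Lemma scale2_norm2_normalize2 w : w != (0, 0) -> scale2 (norm2 w) (normalize2 w) = w.
Proof.
move=> /norm2_gt0 w_gt0; rewrite /normalize2 /scale2 /= !mulrA mulfV ?gt_eqF// !mul1r.
by case: w w_gt0.
Qed.

Lemma trmul_eq0 A w : \det A != 0 -> trmul A w = (0, 0) -> w = (0, 0).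
Proof.
rewrite det_mx2; case: w => w1 w2 dA [e1 e2].
have : w1 * (A 0 0 * A 1 1 - A 0 1 * A 1 0) =
    A 1 1 * (A 0 0 * w1 + A 1 0 * w2) - A 1 0 * (A 0 1 * w1 + A 1 1 * w2) by ring.
have : w2 * (A 0 0 * A 1 1 - A 0 1 * A 1 0) =
    A 0 0 * (A 0 1 * w1 + A 1 1 * w2) - A 0 1 * (A 0 0 * w1 + A 1 0 * w2) by ring.
rewrite e1 e2 !mulr0 subr0 => /eqP + /eqP.
by rewrite !mulf_eq0 (negbTE dA) !orbF => /eqP-> /eqP->.
Qed.

Lemma trmul_surj A w : \det A != 0 -> exists v, trmul A v = w.
Proof.
rewrite det_mx2 => dA.
exists ((A 1 1 * w.1 - A 1 0 * w.2) / (A 0 0 * A 1 1 - A 0 1 * A 1 0),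
        (A 0 0 * w.2 - A 0 1 * w.1) / (A 0 0 * A 1 1 - A 0 1 * A 1 0)).
by rewrite /trmul /=; case: w => w1 w2 /=; congr pair; field.
Qed.

Lemma trmul_circle1_neq0 A th : \det A != 0 -> circle1 th -> trmul A th != (0, 0).
Proof. by move=> dA /circle1_neq0; apply: contra_neq; exact: trmul_eq0. Qed.

Lemma normalize2_trmul_surj A ph : \det A != 0 -> circle1 ph ->
  exists2 th, circle1 th & normalize2 (trmul A th) = ph.
Proof.
move=> dA ph1; have [v vE] := trmul_surj A ph dA.
have v_neq0 : v != (0, 0).
  move: (circle1_neq0 _ ph1); apply: contra_neq => v0.
  by rewrite -vE v0 /trmul /= !mulr0 addr0.
exists (normalize2 v); first exact: circle1_normalize2.
have -> : trmul A (normalize2 v) = scale2 (norm2 v)^-1 ph by rewrite trmul_scale2 vE.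
by rewrite normalize2_scale2 ?invr_gt0 ?norm2_gt0// normalize2_circle1.
Qed.

End plane.

Lemma radon_pushf_affmap {R : realType} (mu : set (R * R) -> \bar R) A y th :
  trmul A th != (0, 0) ->
  radon th (pushf (affmap A y) mu) =
  pushf (fun s => norm2 (trmul A th) * s + dot2 y th) (radon (normalize2 (trmul A th)) mu).
Proof.
move=> /scale2_norm2_normalize2 wE; apply/funext => B; rewrite /radon /pushf.
by congr (mu _); apply/funext => x /=; rewrite dot2_affmap -{1}wE dot2_scale2.
Qed.

(* Here and in proposition8 the rewrites name every argument and no goal about
   [Ntheta] is closed by [done]: unification unfolds [pushf _ _] against the
   set function [mu], and [done] tests conversion by unfolding the integrals in
   [standardize]; both take practically forever. *)
Lemma Ntheta_pushf_affmap {R : realType} (rho : probability R R)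
    (mu : set (R * R) -> \bar R) A y th t :
  \det A != 0 -> circle1 th ->
  Ntheta rho th (pushf (affmap A y) mu) t = Ntheta rho (normalize2 (trmul A th)) mu t.
Proof.
move=> dA th1; have w_neq0 := trmul_circle1_neq0 _ _ dA th1.
have w_gt0 := norm2_gt0 _ w_neq0.
rewrite !Ntheta_standardize (radon_pushf_affmap mu A y th w_neq0).
rewrite [in LHS](cdt_pushf_affine _ _ _ _ w_gt0).
exact: standardize_affine w_gt0 (measurable_cdt rho _).
Qed.

Theorem proposition8 (R : realType) (rho : probability R R)
  (rho_atomless : forall x : R, rho [set x] = 0%E)
  (mu : probability (R * R)%type R) (hmu : in_Pcstar mu)
  (A : 'M[R]_2) (hA : A \in unitmx) (y : R * R) :
  Nmax rho (pushf (affmap A y) mu) = Nmax rho mu.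
Proof.
have dA : \det A != 0 by rewrite -unitfE -unitmxE.
rewrite /Nmax; apply/funext => t; apply: (congr1 (@ereal_sup _)).
apply/seteqP; split => _ [th th1 <-].
- exists (normalize2 (trmul A th)); first exact/circle1_normalize2/trmul_circle1_neq0.
  by rewrite (Ntheta_pushf_affmap rho mu A y th t dA th1).
- have [th' th'1 <-] := normalize2_trmul_surj A th dA th1.
  exists th'; first exact: th'1.
  by rewrite (Ntheta_pushf_affmap rho mu A y th' t dA th'1).
Qed.
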